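(* Let $\hat B$ be the bus susceptance matrix of a connected power network (the post-attack network) with bus set $\mathcal N$. Let $P^g, P^d \in \mathbb R^{\mathcal N}$ be vectors of active generation and load, and let $\theta \in \mathbb R^{\mathcal N}$ satisfy $\hat B\theta = P^g - P^d$. Let $s \neq t$ be two generator buses, let $\Gamma > 0$, and define $\delta \in \mathbb R^{\mathcal N}$ by $\delta_s = \Gamma$, $\delta_t = -\Gamma$, $\delta_k = 0$ for all $k \neq s,t$. Put $\hat P^g = P^g + \delta$ and let $\hat\theta$ satisfy $\hat B \hat\theta = \hat P^g - P^d$. Let $k \neq t$ be a bus such that the network contains a path between $s$ and $k$ that does not include $t$. Then $$\hat\theta_k - \hat\theta_t \;>\; \theta_k - \theta_t .$$
   Context: DC power flow model. The network is an undirected connected graph on the bus set $\mathcal N$; each line $km$ has reactance $x_{km} > 0$. The bus susceptance matrix $\hat B$ is defined by $\hat B_{kk} = \sum_{km \ni k} 1/x_{km}$ (sum over lines incident to $k$), $\hat B_{km} = -1/x_{km}$ if $km$ is a line, and $\hat B_{km} = 0$ otherwise. A path between $s$ and $k$ ''includes $t$'' if $t$ is one of its vertices. *)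

From HB Require Import structures.
From mathcomp Require Import all_boot all_order all_algebra.
Set Implicit Arguments. Unset Strict Implicit. Unset Printing Implicit Defensive.
Import Order.TTheory GRing.Theory Num.Theory.
Local Open Scope ring_scope.

(* Network: buses form a finite type T; lines are given by a symmetric,
   irreflexive relation e; x a b is the reactance of line ab. *)

Definition Bhat (R : realFieldType) (T : finType) (e : rel T) (x : T -> T -> R)
  (k m : T) : R :=
  if k == m then \sum_(j : T | e k j) (x k j)^-1
  else if e k m then - (x k m)^-1 else 0.

Definition Bmul (R : realFieldType) (T : finType) (e : rel T) (x : T -> T -> R)
  (v : T -> R) (k : T) : R :=
  \sum_(m : T) Bhat e x k m * v m.

Definition delta (R : realFieldType) (T : finType) (s t : T) (Gamma : R) (k : T) : R :=
  if k == s then Gamma else if k == t then - Gamma else 0.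

Definition path_avoiding (T : finType) (e : rel T) (s k t : T) : Prop :=
  exists p : seq T, [&& path e s p, last s p == k & t \notin s :: p].

(* The difference d := thetah - theta solves Bhat d = delta, and Bhat acts as the
   weighted graph Laplacian (Bhat d)_v = sum_(vj line) (d v - d j) / x_vj.  Off t
   the right-hand side is nonnegative, so at a minimiser v <> t of d every
   neighbour is again a minimiser.  Connectivity then forces the minimum to be
   attained at t, and the minimisers equal to d t spread along any path avoiding t.
   If d k = d t, the path from k to s would make s a minimiser, where the
   Laplacian is <= 0, contradicting (Bhat d)_s = Gamma > 0.  Hence d k > d t. *)
From HB Require Import structures.
From mathcomp Require Import all_boot all_order all_algebra.
From mathcomp Require Import lra.
Set Implicit Arguments. Unset Strict Implicit. Unset Printing Implicit Defensive.
Import Order.TTheory GRing.Theory Num.Theory.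
Local Open Scope ring_scope.

Section Laplacian.

Variables (R : realFieldType) (T : finType) (e : rel T) (x : T -> T -> R).
Hypothesis e_irr : irreflexive e.

Lemma BmulE (d : T -> R) v :
  Bmul e x d v = \sum_(j | e v j) (x v j)^-1 * (d v - d j).
Proof.
have termE m : Bhat e x v m * d m =
    (if m == v then (\sum_(j | e v j) (x v j)^-1) * d v else 0)
    - (if e v m then (x v m)^-1 * d m else 0).
  rewrite /Bhat; have [->|neq_mv] := eqVneq m v; first by rewrite ?eqxx e_irr subr0.
  by case: ifP => _; rewrite ?mulNr ?sub0r ?mul0r ?oppr0.
rewrite /Bmul (eq_bigr _ (fun m _ => termE m)) sumrB -!big_mkcond /=.
by rewrite big_pred1_eq mulr_suml -sumrB; apply: eq_bigr => j _; rewrite mulrBr.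
Qed.

Lemma BmulB (f g : T -> R) v :
  Bmul e x (fun m => f m - g m) v = Bmul e x f v - Bmul e x g v.
Proof. by rewrite /Bmul -sumrB; apply: eq_bigr => m _; rewrite mulrBr. Qed.

Hypothesis x_pos : forall a b, e a b -> 0 < x a b.

Variables (d : T -> R) (v : T).
Hypothesis v_min : forall w, d v <= d w.

Let adj_term_ge0 j : e v j -> 0 <= (x v j)^-1 * (d j - d v).
Proof. by move=> evj; rewrite mulr_ge0 ?subr_ge0 // invr_ge0 ltW ?x_pos. Qed.

Let BmulNE : Bmul e x d v = - \sum_(j | e v j) (x v j)^-1 * (d j - d v).
Proof. by rewrite BmulE -sumrN; apply: eq_bigr => j _; rewrite -mulrN opprB. Qed.

Lemma Bmul_le0_at_min : Bmul e x d v <= 0.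
Proof. by rewrite BmulNE oppr_le0 sumr_ge0. Qed.

Lemma adj_eq_at_min w : 0 <= Bmul e x d v -> e v w -> d w = d v.
Proof.
move=> Bmul_ge0 evw.
have sum0 : \sum_(j | e v j) (x v j)^-1 * (d j - d v) = 0.
  by apply/eqP; rewrite eq_le sumr_ge0 // andbT -oppr_ge0 -BmulNE.
move/eqP: (psumr_eq0P adj_term_ge0 sum0 evw).
by rewrite mulf_eq0 invr_eq0 gt_eqF ?x_pos //= subr_eq0 => /eqP.
Qed.

End Laplacian.

Definition avoid_rel (T : eqType) (e : rel T) (t : T) : rel T :=
  [rel u w | [&& u != t, w != t & e u w]].

Lemma avoid_rel_sym (T : eqType) (e : rel T) t :
  symmetric e -> symmetric (avoid_rel e t).
Proof. by move=> e_sym u w; rewrite /avoid_rel /= e_sym andbCA. Qed.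

Lemma path_avoiding_connect (T : finType) (e : rel T) s k t :
  path_avoiding e s k t -> connect (avoid_rel e t) s k.
Proof.
case=> p /and3P[e_p /eqP <- t_notin]; apply/connectP; exists p => //.
apply: (@sub_in_path _ (predC1 t)) e_p.
  by move=> u w /[!inE] u_t w_t euw; rewrite /avoid_rel /= u_t w_t.
by apply/allP => u /=; apply: contraTneq => ->.
Qed.

Section MinimumPrinciple.

Variables (R : realFieldType) (T : finType) (e : rel T) (x : T -> T -> R).
Hypotheses (e_sym : symmetric e) (e_irr : irreflexive e).
Hypothesis x_pos : forall a b, e a b -> 0 < x a b.
Variables (d : T -> R) (t : T).
Hypothesis d_super : forall v, v != t -> 0 <= Bmul e x d v.

Lemma min_at_sink (connected : forall a b : T, connect e a b) v : d t <= d v.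
Proof.
case: (arg_minP d (isT : predT t)) => v0 _ v0_min.
suff -> : d t = d v0 by apply: v0_min.
apply/eqP; apply: contraT => neq_t.
have min_closed : closed e [pred u | d u == d v0].
  apply: intro_closed; first exact: sym_connect_sym.
  move=> u w euw /eqP du; rewrite inE; apply/eqP.
  have u_min y : d u <= d y by rewrite du v0_min.
  rewrite -du (adj_eq_at_min e_irr x_pos u_min _ euw) //.
  by apply: d_super; apply: contraNneq neq_t => <-; rewrite du.
have := closed_connect min_closed (connected v0 t).
by rewrite !inE eqxx (negbTE neq_t).
Qed.

Lemma eq_min_connect_avoid (t_min : forall w, d t <= d w) u w :
  connect (avoid_rel e t) u w -> (d u == d t) = (d w == d t).
Proof.
move=> conn_uw; suff min_closed : closed (avoid_rel e t) [pred y | d y == d t].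
  by have := closed_connect min_closed conn_uw; rewrite !inE.
apply: intro_closed; first exact/sym_connect_sym/avoid_rel_sym.
move=> a b /and3P[a_t _ eab] /eqP da; rewrite inE; apply/eqP.
by rewrite (adj_eq_at_min _ _ _ (d_super a_t)) // da.
Qed.

End MinimumPrinciple.

Lemma delta_ge0 (R : realFieldType) (T : finType) (s t : T) (Gamma : R) v :
  0 <= Gamma -> v != t -> 0 <= delta s t Gamma v.
Proof. by rewrite /delta => ? /negbTE ->; case: ifP. Qed.

Theorem lemma1 (R : realFieldType) (T : finType) (e : rel T) (x : T -> T -> R)
  (e_sym : symmetric e) (e_irr : irreflexive e)
  (x_sym : forall a b, x a b = x b a)
  (x_pos : forall a b, e a b -> 0 < x a b)
  (connected : forall a b : T, connect e a b)
  (Gen : {set T}) (Pg Pd theta thetah : T -> R)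
  (Htheta : forall k, Bmul e x theta k = Pg k - Pd k)
  (s t : T) (hs : s \in Gen) (ht : t \in Gen) (hst : s != t)
  (Gamma : R) (hGamma : 0 < Gamma)
  (Hthetah : forall k, Bmul e x thetah k = (Pg k + delta s t Gamma k) - Pd k)
  (k : T) (hk : k != t) (hpath : path_avoiding e s k t) :
  theta k - theta t < thetah k - thetah t.
Proof.
pose d v := thetah v - theta v.
have Bmul_d v : Bmul e x d v = delta s t Gamma v.
  by rewrite BmulB Htheta Hthetah; lra.
have d_super v : v != t -> 0 <= Bmul e x d v.
  by rewrite Bmul_d; apply: delta_ge0; rewrite ltW.
have t_min := min_at_sink e_sym e_irr x_pos d_super connected.
suff : d t < d k by rewrite /d; lra.
rewrite lt_def t_min andbT eq_sym; apply/negP => /eqP dk.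
have /eqP ds : d s == d t.
  have := eq_min_connect_avoid e_sym e_irr x_pos d_super t_min.
  by move=> /(_ _ _ (path_avoiding_connect hpath)) ->; rewrite dk.
have s_min w : d s <= d w by rewrite ds t_min.
have := Bmul_le0_at_min e_irr x_pos s_min.
by rewrite Bmul_d /delta eqxx; lra.
Qed.
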